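(* Let $g,h,K$ be complex numbers with $K\neq\tfrac12$, and set $K'=K(2K-1)^{-1}$. For any complex $L$ let $$\hat R(L;g,h)=\begin{pmatrix}1&-hL&hL&ghL\\0&1-L&L&gL\\0&L&1-L&-gL\\0&0&0&1\end{pmatrix},\qquad R(L;g,h)=P\hat R(L;g,h).$$ Then $R(K';g,h)$ is invertible and $$P\,R(K;g,h)\,P=\big(R(K';g,h)\big)^{-1}.$$
   Context: Matrices are written in the ordered basis $e_1\otimes e_1,e_1\otimes e_2,e_2\otimes e_1,e_2\otimes e_2$ of $\mathbb{C}^2\otimes\mathbb{C}^2$; $P$ is the flip matrix, i.e. the $4\times4$ permutation matrix swapping the second and third basis vectors. The matrix $PRP$ is what the paper denotes $(21)R$. *)

From HB Require Import structures.
From mathcomp Require Import all_boot all_order all_algebra.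
From mathcomp Require Import complex.
From mathcomp Require Import reals.
Set Implicit Arguments. Unset Strict Implicit. Unset Printing Implicit Defensive.
Import GRing.Theory Num.Theory.
Local Open Scope ring_scope.
Local Open Scope complex_scope.

(* Basis order: e1(x)e1, e1(x)e2, e2(x)e1, e2(x)e2  ~ indices 0,1,2,3. *)

Definition flipP {F : nzRingType} : 'M[F]_4 :=
  \matrix_(i < 4, j < 4)
   nth 0 (nth [::] [:: [:: 1; 0; 0; 0];
                       [:: 0; 0; 1; 0];
                       [:: 0; 1; 0; 0];
                       [:: 0; 0; 0; 1]] i) j.

Definition Rhat {F : comNzRingType} (L g h : F) : 'M[F]_4 :=
  \matrix_(i < 4, j < 4)
   nth 0 (nth [::] [:: [:: 1; - h * L; h * L; g * h * L];
                       [:: 0; 1 - L; L; g * L];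
                       [:: 0; L; 1 - L; - g * L];
                       [:: 0; 0; 0; 1]] i) j.

Definition Rmat {F : comNzRingType} (L g h : F) : 'M[F]_4 := flipP *m Rhat L g h.

(** The matrices [Rhat L] form a one-parameter family closed under
    multiplication: [Rhat L *m Rhat M = Rhat (L + M - 2 L M)], the
    "parameter" [1 - 2 L] being multiplicative.  Since [P] is an involution,
    [P (P Rhat K) P = Rhat K P] is a left inverse of [P Rhat K'] as soon as
    [K + K' - 2 K K' = 0], which is exactly how [K' = K / (2 K - 1)] is
    chosen. *)

From HB Require Import structures.
From mathcomp Require Import all_boot all_order all_algebra.
From mathcomp Require Import complex reals.
From mathcomp Require Import ring.
Import GRing.Theory Num.Theory.
Local Open Scope ring_scope.
Local Open Scope complex_scope.

Lemma flipP_invol (F : nzRingType) : (flipP : 'M[F]_4) *m flipP = 1%:M.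
Proof.
apply/matrixP => i j; rewrite !mxE !big_ord_recr big_ord0 /= !mxE.
by case: i => [[|[|[|[|i]]]] Hi] //; case: j => [[|[|[|[|j]]]] Hj] //=;
  rewrite !(mul0r, mul1r, add0r, addr0).
Qed.

Section Rhat.

Context {F : comNzRingType}.

Lemma Rhat0 (g h : F) : Rhat 0 g h = 1%:M.
Proof.
apply/matrixP => i j; rewrite !mxE.
by case: i => [[|[|[|[|i]]]] Hi] //; case: j => [[|[|[|[|j]]]] Hj] //=;
  rewrite ?mxE /=; ring.
Qed.

Lemma Rhat_mul (L M g h : F) :
  Rhat L g h *m Rhat M g h = Rhat (L + M - 2 * L * M) g h.
Proof.
apply/matrixP => i j; rewrite !mxE !big_ord_recr big_ord0 /= !mxE.
by case: i => [[|[|[|[|i]]]] Hi] //; case: j => [[|[|[|[|j]]]] Hj] //=;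
  rewrite ?mxE /=; ring.
Qed.

Lemma flipP_conj_Rmat (K g h : F) :
  flipP *m Rmat K g h *m flipP = Rhat K g h *m flipP.
Proof. by rewrite /Rmat mulmxA flipP_invol mul1mx. Qed.

Lemma Rmat_conj_mulmx (L M g h : F) :
  flipP *m Rmat L g h *m flipP *m Rmat M g h = Rhat (L + M - 2 * L * M) g h.
Proof.
by rewrite flipP_conj_Rmat /Rmat -mulmxA (mulmxA flipP) flipP_invol mul1mx
  Rhat_mul.
Qed.

End Rhat.

Lemma Rmat_unit_conj_inv (F : comUnitRingType) (L M g h : F) :
  L + M - 2 * L * M = 0 ->
  Rmat M g h \in unitmx /\ flipP *m Rmat L g h *m flipP = invmx (Rmat M g h).
Proof.
move=> LM0; have inv_l := Rmat_conj_mulmx L M g h.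
rewrite LM0 Rhat0 in inv_l.
have unitM : Rmat M g h \in unitmx by case/mulmx1_unit: inv_l.
split=> //; by rewrite -[LHS]mulmx1 -(mulmxV unitM) mulmxA inv_l mul1mx.
Qed.

Theorem mainTheorem10 (R : realType) (g h K : R[i]) :
  K != 2^-1 ->
  let K' := K / (2 * K - 1) in
  Rmat K' g h \in unitmx /\
  flipP *m Rmat K g h *m flipP = invmx (Rmat K' g h).
Proof.
move=> K_neq_half K'; apply: Rmat_unit_conj_inv.
have den_neq0 : 2 * K - 1 != 0.
  apply: contra K_neq_half; rewrite subr_eq0 => /eqP twoK1.
  have two_neq0 : (2 : R[i]) != 0 by rewrite pnatr_eq0.
  by apply/eqP/(mulfI two_neq0); rewrite twoK1 mulfV.
by rewrite /K'; field.
Qed.
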